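(* Let $\mathcal X$ be a set, $k:\mathcal X\times\mathcal X\to\mathbb R$ any positive-semidefinite kernel, and define $\tilde k(x,x')=k(x,x)$ if $x=x'$ and $\tilde k(x,x')=0$ if $x\ne x'$. Let $x_1,x_2,\dots\in\mathcal X$ be any points (repetitions allowed) with observations, and for $t\ge0$ let $\sigma_t^2$ and $\tilde\sigma_t^2$ denote the GP posterior predictive variances, with Gaussian noise variance $\sigma_\epsilon^2>0$, of GP models with prior covariance $k$ and $\tilde k$ respectively, both conditioned on the observations at $x_1,\dots,x_t$. Then for all $t\ge0$ and all $x\in\mathcal X$, $$\sigma_t^2(x)\le\tilde\sigma_t^2(x)=\frac{\sigma_\epsilon^2\,\tilde\sigma_0^2(x)}{\sigma_\epsilon^2+N_t(x)\,\tilde\sigma_0^2(x)},$$ where $N_t(x)=\sum_{i=1}^t\mathbb 1\{x_i=x\}$ and $\tilde\sigma_0^2(x)=\sigma_0^2(x)=k(x,x)$.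
   Context: For a prior covariance $c$ and observation points $x_1,\dots,x_t$, the GP posterior variance with noise variance $\sigma_\epsilon^2$ is $\sigma_t^2(x)=c(x,x)-\mathbf c_t(x)^\top(\mathbf C_t+\sigma_\epsilon^2I)^{-1}\mathbf c_t(x)$, where $\mathbf c_t(x)=[c(x,x_i)]_{i=1}^t$ and $\mathbf C_t=[c(x_i,x_j)]_{i,j=1}^t$; for $t=0$ it is $c(x,x)$. It does not depend on the observed values. *)

From HB Require Import structures.
From mathcomp Require Import all_boot all_order all_algebra.
From mathcomp Require Import boolp reals.
Set Implicit Arguments. Unset Strict Implicit. Unset Printing Implicit Defensive.
Import Order.TTheory GRing.Theory Num.Theory.
Local Open Scope ring_scope.

Definition psd_kernel (R : realType) (X : Type) (k : X -> X -> R) : Prop :=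
  (forall x y, k x y = k y x) /\
  (forall (n : nat) (pts : 'I_n -> X) (c : 'I_n -> R),
      0 <= \sum_(i < n) \sum_(j < n) c i * c j * k (pts i) (pts j)).

Definition diag_kernel (R : realType) (X : Type) (k : X -> X -> R) : X -> X -> R :=
  fun x x' => if `[< x = x' >] then k x x else 0.

(* c_t(x) = [c(x, x_i)]_{i=1..t} (index i : 'I_t stands for x_{i+1}). *)
Definition kvec (R : realType) (X : Type) (c : X -> X -> R) (xs : nat -> X)
  (t : nat) (x : X) : 'cV[R]_t := \col_(i < t) c x (xs i).

Definition kmat (R : realType) (X : Type) (c : X -> X -> R) (xs : nat -> X)
  (t : nat) : 'M[R]_t := \matrix_(i < t, j < t) c (xs i) (xs j).

Definition post_var (R : realType) (X : Type) (c : X -> X -> R) (s2 : R)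
  (xs : nat -> X) (t : nat) (x : X) : R :=
  c x x - ((kvec c xs t x)^T *m invmx (kmat c xs t + s2%:M) *m kvec c xs t x) 0 0.

Definition count_obs (R : realType) (X : Type) (xs : nat -> X) (t : nat) (x : X) : R :=
  \sum_(i < t) (if `[< xs i = x >] then 1 else 0).

(* For a positive-definite symmetric A, c^T A^-1 c = max_w (2 w^T c - w^T A w),
   so every test vector w bounds the posterior variance from above.  Take w
   proportional to the indicator of the observations located at x: on those
   coordinates k and its diagonal version agree (every entry is k(x,x)), and for
   the diagonal kernel this w is exactly A^-1 c, because the indicator is an
   eigenvector of the diagonal Gram matrix with eigenvalue N_t(x) k(x,x).  So the
   bound obtained for k is the diagonal posterior variance, computed in closed
   form. *)

From HB Require Import structures.
From mathcomp Require Import all_boot all_order all_algebra.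
From mathcomp Require Import boolp reals ring lra.
Set Implicit Arguments. Unset Strict Implicit. Unset Printing Implicit Defensive.
Import Order.TTheory GRing.Theory Num.Theory.
Local Open Scope ring_scope.

Section PsdMatrix.
Variables (R : realType) (n : nat).
Implicit Types (A : 'M[R]_n) (u v w c : 'cV[R]_n).

Definition psdmx A := forall u, 0 <= (u^T *m A *m u) 0 0.

Lemma mx11_tr (M : 'M[R]_1) : M^T 0 0 = M 0 0.
Proof. by rewrite mxE. Qed.

Lemma dotmxC u v : (u^T *m v) 0 0 = (v^T *m u) 0 0.
Proof. by rewrite -mx11_tr trmx_mul trmxK. Qed.

Lemma dotmxZl a u v : ((a *: u)^T *m v) 0 0 = a * (u^T *m v) 0 0.
Proof. by rewrite linearZ /= -scalemxAl mxE. Qed.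

Lemma dotmxZr a u v : (u^T *m (a *: v)) 0 0 = a * (u^T *m v) 0 0.
Proof. by rewrite -scalemxAr mxE. Qed.

Lemma qformZ a A u : ((a *: u)^T *m A *m (a *: u)) 0 0 = a ^+ 2 * (u^T *m A *m u) 0 0.
Proof. by rewrite -mulmxA dotmxZl -scalemxAr dotmxZr mulrA -expr2 mulmxA. Qed.

Lemma dotmx_self u : (u^T *m u) 0 0 = \sum_i u i 0 ^+ 2.
Proof. by rewrite mxE; apply: eq_bigr => i _; rewrite mxE. Qed.

Lemma dotmx_self_eq0 u : (u^T *m u) 0 0 = 0 -> u = 0.
Proof.
rewrite dotmx_self => sum0; apply/matrixP => i j; rewrite (ord1 j) mxE.
by apply/eqP; rewrite -sqrf_eq0 (psumr_eq0P (fun i _ => sqr_ge0 (u i 0)) sum0).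
Qed.

Lemma qform_add_scalar A s u :
  (u^T *m (A + s%:M) *m u) 0 0 = (u^T *m A *m u) 0 0 + s * (u^T *m u) 0 0.
Proof. by rewrite mulmxDr mulmxDl mul_mx_scalar -scalemxAl !mxE. Qed.

Lemma psdmx_add_scalar A s : psdmx A -> 0 <= s -> psdmx (A + s%:M).
Proof.
move=> psdA s0 u; rewrite qform_add_scalar addr_ge0 // mulr_ge0 //.
by rewrite dotmx_self sumr_ge0 // => i _; rewrite sqr_ge0.
Qed.

Lemma psdmx_add_scalar_unit A s : psdmx A -> 0 < s -> A + s%:M \in unitmx.
Proof.
move=> psdA s0; rewrite unitmxE unitfE; apply/negP => /det0P [v v0 vA0].
have vv_ge0 : 0 <= (v^T^T *m v^T) 0 0 by rewrite dotmx_self sumr_ge0 // => i _; rewrite sqr_ge0.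
have : (v^T^T *m (A + s%:M) *m v^T) 0 0 = 0 by rewrite trmxK vA0 mul0mx mxE.
rewrite qform_add_scalar => quad0.
have /dotmx_self_eq0 vT0 : (v^T^T *m v^T) 0 0 = 0 by have := psdA v^T; nra.
by move: v0; rewrite -[v]trmxK vT0 trmx0 eqxx.
Qed.

Lemma qform_tr A u v : A^T = A -> (u^T *m A *m v) 0 0 = (v^T *m A *m u) 0 0.
Proof. by move=> AT; rewrite -mx11_tr !trmx_mul trmxK AT mulmxA. Qed.

Lemma psdmx_invmx_qform_lb A c w : A^T = A -> psdmx A -> A \in unitmx ->
  2 * (w^T *m c) 0 0 - (w^T *m A *m w) 0 0 <= (c^T *m invmx A *m c) 0 0.
Proof.
move=> AT psdA Au; set u := invmx A *m c.
have Auc : A *m u = c by rewrite mulKVmx.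
have uc : (c^T *m invmx A *m c) 0 0 = (u^T *m c) 0 0 by rewrite dotmxC mulmxA.
have := psdA (w - u).
have entB (M N : 'M[R]_1) : (M - N) 0 0 = M 0 0 - N 0 0 by rewrite !mxE.
rewrite mulmxBr [(w - u)^T]linearB /= !mulmxBl !entB (qform_tr u w AT) uc.
by rewrite -!mulmxA Auc; lra.
Qed.
End PsdMatrix.

Section DiagKernel.
Variables (R : realType) (X : Type) (k : X -> X -> R).

Lemma psd_kernel_ge0 x : psd_kernel k -> 0 <= k x x.
Proof. by case=> _ /(_ 1%N (fun=> x) (fun=> 1)); rewrite !big_ord1 !mul1r. Qed.

Lemma asbool_eq_sym (x y : X) : `[< x = y >] = `[< y = x >].
Proof. exact: asbool_equiv_eq (conj esym esym). Qed.

Lemma diag_kernelxx x : diag_kernel k x x = k x x.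
Proof. by rewrite /diag_kernel asboolT. Qed.

Lemma diag_kernelC x y : diag_kernel k x y = diag_kernel k y x.
Proof. by rewrite /diag_kernel asbool_eq_sym; case: asboolP => [->|]. Qed.

Section Points.
Variables (m : nat) (pts : 'I_m -> X).

Let same i j : R := if `[< pts i = pts j >] then 1 else 0.
Let mult i := \sum_(l < m) same i l.

Lemma same_ge0 i j : 0 <= same i j.
Proof. by rewrite /same; case: ifP. Qed.

Lemma mult_gt0 i : 0 < mult i.
Proof.
rewrite /mult (bigD1 i) //= /same asboolT //.
by rewrite ltr_pwDl // sumr_ge0 // => l _; exact: same_ge0.
Qed.

(* The Gram matrix of the diagonal kernel is a nonnegative combination of
   the rank-one matrices of the indicator vectors of the level sets of pts. *)
Lemma diag_kernel_gram i j :
  diag_kernel k (pts i) (pts j) =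
  \sum_(l < m) same i l * same j l * (k (pts l) (pts l) / mult l).
Proof.
rewrite /diag_kernel; case: asboolP => [eij | neij]; last first.
  apply/esym/big1 => l _; rewrite /same.
  case: asboolP => [il|_]; last by rewrite !mul0r.
  by case: asboolP => [jl|_]; [rewrite il jl in neij | rewrite mulr0 mul0r].
have same_r l : same j l = same i l by rewrite /same eij.
have mult_l l : same i l = 1 -> mult l = mult i.
  rewrite /same; case: asboolP => [eil _|_ /eqP]; last by rewrite eq_sym oner_eq0.
  by apply: eq_bigr => l' _; rewrite /same eil.
transitivity (\sum_(l < m) same i l * (k (pts i) (pts i) / mult i)).
  by rewrite -big_distrl /= -/(mult i) mulrCA divff ?mulr1 // gt_eqF ?mult_gt0.
apply: eq_bigr => l _; rewrite same_r; case: (asboolP (pts i = pts l)) => eil.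
  have sil : same i l = 1 by rewrite /same asboolT.
  by rewrite sil mult_l // !mul1r -eil.
have sil : same i l = 0 by rewrite /same asboolF.
by rewrite sil !mul0r.
Qed.

Lemma diag_kernel_qform_ge0 (z : 'I_m -> R) : (forall x, 0 <= k x x) ->
  0 <= \sum_(i < m) \sum_(j < m) z i * z j * diag_kernel k (pts i) (pts j).
Proof.
move=> k0; pose c l := k (pts l) (pts l) / mult l.
have -> : \sum_(i < m) \sum_(j < m) z i * z j * diag_kernel k (pts i) (pts j) =
    \sum_(l < m) (\sum_(i < m) same i l * z i) ^+ 2 * c l.
  transitivity (\sum_(i < m) \sum_(j < m) \sum_(l < m) same i l * z i * (same j l * z j) * c l).
    apply: eq_bigr => i _; apply: eq_bigr => j _.
    by rewrite diag_kernel_gram mulr_sumr; apply: eq_bigr => l _; rewrite /c; ring.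
  under eq_bigr => i _ do rewrite exchange_big /=.
  rewrite exchange_big; apply: eq_bigr => l _.
  rewrite expr2 !big_distrl; apply: eq_bigr => i _ /=.
  by rewrite mulr_sumr big_distrl; apply: eq_bigr => j _ /=; ring.
apply: sumr_ge0 => l _; apply: mulr_ge0; first exact: sqr_ge0.
by apply: divr_ge0; [exact: k0 | exact: ltW (mult_gt0 l)].
Qed.

End Points.

Lemma diag_kernel_psd : (forall x, 0 <= k x x) -> psd_kernel (diag_kernel k).
Proof.
by move=> k0; split=> [x y|m pts z]; [exact: diag_kernelC | exact: diag_kernel_qform_ge0].
Qed.

End DiagKernel.

Section KernelMatrices.
Variables (R : realType) (X : Type) (xs : nat -> X) (t : nat).
Implicit Types (c k : X -> X -> R) (x : X).

Lemma kmat_qform c (u : 'cV[R]_t) :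
  (u^T *m kmat c xs t *m u) 0 0 = \sum_(i < t) \sum_(j < t) u i 0 * u j 0 * c (xs i) (xs j).
Proof.
rewrite mxE exchange_big; apply: eq_bigr => j _.
by rewrite mxE big_distrl; apply: eq_bigr => i _; rewrite !mxE mulrAC.
Qed.

Lemma kmat_tr c : (forall x y, c x y = c y x) -> (kmat c xs t)^T = kmat c xs t.
Proof. by move=> csym; apply/matrixP => i j; rewrite !mxE csym. Qed.

Lemma kmat_psd c : psd_kernel c -> psdmx (kmat c xs t).
Proof. by move=> [_ cpsd] u; rewrite kmat_qform; exact: cpsd. Qed.

Lemma kmat_noise_unit c (s2 : R) : psd_kernel c -> 0 < s2 -> kmat c xs t + s2%:M \in unitmx.
Proof. by move=> cpsd s2p; exact: psdmx_add_scalar_unit (kmat_psd cpsd) s2p. Qed.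

Lemma post_var0 c (s2 : R) x : post_var c s2 xs 0 x = c x x.
Proof. by rewrite /post_var [X in _ - X]mxE big_ord0 subr0. Qed.

Lemma post_var_ub c (s2 : R) x (w : 'cV[R]_t) : psd_kernel c -> 0 < s2 ->
  post_var c s2 xs t x <=
  c x x - (2 * (w^T *m kvec c xs t x) 0 0 - (w^T *m (kmat c xs t + s2%:M) *m w) 0 0).
Proof.
move=> cpsd s2p; rewrite /post_var lerD2l lerN2; apply: psdmx_invmx_qform_lb.
- by rewrite linearD /= kmat_tr ?tr_scalar_mx //; case: cpsd.
- exact: psdmx_add_scalar (kmat_psd cpsd) (ltW s2p).
- exact: kmat_noise_unit.
Qed.

Definition obs_ind x : 'cV[R]_t := \col_i (if `[< xs i = x >] then 1 else 0).

Lemma count_obs_ge0 x : 0 <= count_obs R xs t x.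
Proof. by apply: sumr_ge0 => i _; case: ifP. Qed.

Lemma obs_ind_dot x : ((obs_ind x)^T *m obs_ind x) 0 0 = count_obs R xs t x.
Proof.
by rewrite dotmx_self; apply: eq_bigr => i _; rewrite mxE; case: ifP; rewrite ?expr1n ?expr0n.
Qed.

Lemma obs_ind_kvec c x : ((obs_ind x)^T *m kvec c xs t x) 0 0 = count_obs R xs t x * c x x.
Proof.
rewrite mxE big_distrl; apply: eq_bigr => i _ /=; rewrite !mxE.
by case: asboolP => [->|_]; rewrite ?mul1r ?mul0r.
Qed.

Lemma obs_ind_kmat c x :
  ((obs_ind x)^T *m kmat c xs t *m obs_ind x) 0 0 = count_obs R xs t x ^+ 2 * c x x.
Proof.
rewrite kmat_qform expr2 !big_distrl; apply: eq_bigr => i _ /=.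
rewrite big_distrr big_distrl; apply: eq_bigr => j _ /=; rewrite !mxE.
by case: asboolP => [->|_]; case: asboolP => [->|_]; rewrite ?mul1r ?mul0r ?mulr0.
Qed.

Lemma kvec_diag_kernel k x : kvec (diag_kernel k) xs t x = k x x *: obs_ind x.
Proof.
apply/matrixP => i j; rewrite !mxE /diag_kernel asbool_eq_sym.
by case: asboolP => _; rewrite ?mulr1 ?mulr0.
Qed.

Lemma kmat_diag_kernel_obs_ind k x :
  kmat (diag_kernel k) xs t *m obs_ind x = (count_obs R xs t x * k x x) *: obs_ind x.
Proof.
apply/matrixP => i j; rewrite !mxE; case: asboolP => [xix|xinx].
  rewrite mulr1 /count_obs big_distrl; apply: eq_bigr => l _ /=.
  rewrite !mxE /diag_kernel xix asbool_eq_sym.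
  by case: asboolP => _; rewrite ?mulr1 ?mul1r ?mulr0 ?mul0r.
rewrite mulr0; apply: big1 => l _; rewrite !mxE /diag_kernel.
case: asboolP => [il|_]; last by rewrite mul0r.
by case: asboolP => [lx|_]; [rewrite il lx in xinx | rewrite mulr0].
Qed.

Lemma obs_denom_neq0 (s2 a : R) x : 0 < s2 -> 0 <= a -> s2 + count_obs R xs t x * a != 0.
Proof. by move=> s2p a0; apply/lt0r_neq0/(ltr_wpDr _ s2p)/mulr_ge0 => //; exact: count_obs_ge0. Qed.

Lemma post_var_diag_kernel k (s2 : R) x : (forall y, 0 <= k y y) -> 0 < s2 ->
  post_var (diag_kernel k) s2 xs t x =
  s2 * k x x / (s2 + count_obs R xs t x * k x x).
Proof.
move=> k0 s2p; set N := count_obs R xs t x; set a := k x x; set D := s2 + N * a.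
have D0 : D != 0 := obs_denom_neq0 x s2p (k0 x).
have solve : (kmat (diag_kernel k) xs t + s2%:M) *m ((a / D) *: obs_ind x) =
    kvec (diag_kernel k) xs t x.
  rewrite -scalemxAr mulmxDl kmat_diag_kernel_obs_ind mul_scalar_mx -scalerDl.
  by rewrite scalerA kvec_diag_kernel addrC -/N -/a -/D mulfVK.
rewrite /post_var -mulmxA -{2}solve mulKmx; last first.
  exact: kmat_noise_unit (diag_kernel_psd k0) s2p.
rewrite kvec_diag_kernel diag_kernelxx dotmxZl dotmxZr obs_ind_dot -/N -/a.
by rewrite /D; field.
Qed.

Lemma post_var_le_diag_kernel k (s2 : R) x : psd_kernel k -> 0 < s2 ->
  post_var k s2 xs t x <= post_var (diag_kernel k) s2 xs t x.
Proof.
move=> kpsd s2p; have k0 y := psd_kernel_ge0 y kpsd.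
rewrite post_var_diag_kernel //; set N := count_obs R xs t x; set a := k x x.
set D := s2 + N * a.
have D0 : D != 0 := obs_denom_neq0 x s2p (k0 x).
apply: le_trans (post_var_ub x ((a / D) *: obs_ind x) kpsd s2p) _.
rewrite dotmxZl obs_ind_kvec qformZ qform_add_scalar obs_ind_kmat obs_ind_dot -/N -/a.
by rewrite [Y in Y <= _](_ : _ = s2 * a / D) // /D; field.
Qed.

End KernelMatrices.

Theorem mainTheorem4 (R : realType) (X : Type) (k : X -> X -> R)
  (xs : nat -> X) (s2 : R) :
  psd_kernel k -> 0 < s2 ->
  forall (t : nat) (x : X),
    post_var k s2 xs t x <= post_var (diag_kernel k) s2 xs t x /\
    post_var (diag_kernel k) s2 xs t x =
      s2 * post_var (diag_kernel k) s2 xs 0 x /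
        (s2 + count_obs R xs t x * post_var (diag_kernel k) s2 xs 0 x) /\
    post_var (diag_kernel k) s2 xs 0 x = post_var k s2 xs 0 x /\
    post_var k s2 xs 0 x = k x x.
Proof.
move=> kpsd s2p t x; rewrite !post_var0 diag_kernelxx.
split; first exact: post_var_le_diag_kernel.
split=> //; apply: post_var_diag_kernel s2p => y; exact: psd_kernel_ge0.
Qed.
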